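(* Let $t=2k-1$ be odd. With $L^{(t)}_0(x)=1$ and $L^{(t)}_m(x)=0$ for $m<0$, for all $n\ge0$, \[ L^{(t)}_{n+1}(x)=x\,L^{(t)}_n(x)-(k!)^2\Big(\binom{n}{k-1}^2+2\binom{n}{k}\binom{n}{k-1}\Big)L^{(t)}_{n-(k-1)}(x)-\Big(\binom{n}{t}\binom{t}{k}(k!)^2\Big)^2L^{(t)}_{n-t}(x). \]
   Context: Let $t\ge1$ be odd and $k=(t+1)/2$. In the complete bipartite graph $K_{n,n}$ (two parts of $n$ vertices each), a $t$-path is a subgraph isomorphic to a path with $t$ edges; it has exactly $k$ vertices in each part. Let $M_t(K_{n,n})=\sum_F(-1)^{|F|}x^{\,2n-(t+1)|F|}$, the sum over all families $F$ of pairwise vertex-disjoint $t$-paths in $K_{n,n}$. The Laguerre polynomial of order $t$ is the polynomial $L^{(t)}_n$ defined by $L^{(t)}_n(x^2)=M_t(K_{n,n})$ (which exists since every exponent is even). *)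

From HB Require Import structures.
From mathcomp Require Import all_boot all_order all_algebra.
Set Implicit Arguments. Unset Strict Implicit. Unset Printing Implicit Defensive.
Import Order.TTheory GRing.Theory Num.Theory.
Local Open Scope ring_scope.

(* Vertices of K_{n,n}: inl i (left part), inr j (right part). *)
Definition vert (n : nat) : finType := ('I_n + 'I_n)%type.

(* Edges of K_{n,n}: the pair (i, j) is the edge {inl i, inr j}. *)
Definition edge (n : nat) : finType := ('I_n * 'I_n)%type.

Definition edge_verts n (e : edge n) : {set vert n} :=
  [set (inl e.1 : vert n); inr e.2].

Definition verts n (E : {set edge n}) : {set vert n} :=
  \bigcup_(e in E) edge_verts e.

Definition is_tpath (t n : nat) (E : {set edge n}) : bool :=
  [exists s : (t.+1).-tuple (vert n),
    [&& uniq s,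
        all (fun p => [exists e : edge n, edge_verts e == [set p.1; p.2]])
            (zip s (behead s))
      & E == [set e : edge n |
               has (fun p => edge_verts e == [set p.1; p.2]) (zip s (behead s))]]].

Definition tpath_family (t n : nat) (F : {set {set edge n}}) : bool :=
  [forall E in F, is_tpath t E] &&
  [forall E1 in F, forall E2 in F,
      (E1 != E2) ==> [disjoint verts E1 & verts E2]].

Definition Mt (t n : nat) : {poly int} :=
  \sum_(F : {set {set edge n}} | tpath_family t F)
     (-1) ^+ #|F| *: 'X^(2 * n - t.+1 * #|F|).

(* Laguerre polynomial of order t: L with L(x^2) = M_t(K_{n,n}),
   i.e. the polynomial whose i-th coefficient is the 2i-th coefficient of M_t. *)
Definition Lag (t n : nat) : {poly int} :=
  \poly_(i < n.+1) (Mt t n)`_(2 * i).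

Definition Lagz (t : nat) (m : int) : {poly int} :=
  match m with
  | Posz m' => Lag t m'
  | Negz _ => 0
  end.

(* A t-path has k vertices in each part and, read from its left end, is the
   zigzag a_0 b_0 a_1 b_1 ... a_p b_p of two injections a, b : 'I_k -> 'I_n;
   conversely its edge set determines the zigzag (sections Walks and Zigzag).
   So the t-paths avoiding a set of vertices are counted by falling
   factorials, and double counting the families of j+1 disjoint t-paths with
   one marked path gives, for the number N_n(j) of families of j paths,
   (j+1) N_n(j+1) = N_n(j) ((n - kj)^_k)^2, i.e. j! N_n(j) = (n^_(kj))^2
   (section Families).  Grouping families by size, L_n(x) is the sum over j
   of (-1)^j N_n(j) x^(n-kj) (section LaguerreExpansion), and the recurrence
   reduces termwise to N_{n+1}(j) = N_n(j) + A_n N_{n-p}(j-1) - B_n N_{n-t}(j-2),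
   which after multiplication by j! is an identity between falling
   factorials (section Recurrence). *)

From HB Require Import structures.
From mathcomp Require Import all_boot all_order all_algebra.
From mathcomp Require Import zify ring.
Import Order.TTheory GRing.Theory Num.Theory.

Set Implicit Arguments. Unset Strict Implicit. Unset Printing Implicit Defensive.

Lemma doubleton_eq (T : finType) (u v x y : T) :
  [set u; v] = [set x; y] -> (u = x /\ v = y) \/ (u = y /\ v = x).
Proof.
move=> uv_xy.
have /set2P[] : u \in [set x; y] by rewrite -uv_xy set21.
all: have /set2P[] : v \in [set x; y] by rewrite -uv_xy set22.
all: have /set2P[] : x \in [set u; v] by rewrite uv_xy set21.
all: have /set2P[] : y \in [set u; v] by rewrite uv_xy set22.
all: move=> *; subst; by [left | right].
Qed.

Lemma mem_zip_behead (T : eqType) (x0 : T) (s : seq T) q :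
  reflect (exists2 m, m.+1 < size s & q = (nth x0 s m, nth x0 s m.+1))
          (q \in zip s (behead s)).
Proof.
apply: (iffP idP).
- elim: s => [|x [|y s] IHs] //=; rewrite in_cons => /orP[/eqP-> | /IHs[m lt_m ->]].
  + by exists 0.
  + by exists m.+1.
- case=> m + ->; elim: s m => [|x [|y s] IHs] [|m] //= lt_m; first by rewrite mem_head.
  by rewrite in_cons IHs ?orbT.
Qed.

Section Walks.
Variable n : nat.
Implicit Types (u v : vert n) (s : seq (vert n)) (e : edge n).

Definition on_left v : bool := if v is inl _ then true else false.

Definition vindex v : 'I_n := match v with inl x => x | inr y => y end.

Lemma vindexK v : (if on_left v then inl (vindex v) else inr (vindex v)) = v.
Proof. by case: v. Qed.

Lemma vindex_inj u v : on_left u = on_left v -> vindex u = vindex v -> u = v.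
Proof. by move=> side_uv index_uv; rewrite -[u]vindexK -[v]vindexK side_uv index_uv. Qed.

Definition adjacent u v := [exists e, edge_verts e == [set u; v]].

Lemma adjacentE u v : adjacent u v = (on_left u != on_left v).
Proof.
apply/existsP/idP => [[e /eqP /doubleton_eq[[<- <-] | [<- <-]]] // | ].
case: u v => [x|x] [y|y] //= _; first by exists (x, y).
by exists (y, x); rewrite /edge_verts setUC.
Qed.

Definition walk_edges s : {set edge n} :=
  [set e | has (fun q => edge_verts e == [set q.1; q.2]) (zip s (behead s))].

(* A default vertex for [nth]; it is only read at indices in range. *)
Variable x0 : vert n.

Definition is_walk s :=
  forall m, m.+1 < size s -> adjacent (nth x0 s m) (nth x0 s m.+1).

Definition step s u v :=
  exists2 m, m.+1 < size s & [set u; v] = [set nth x0 s m; nth x0 s m.+1].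

Lemma step_sym s u v : step s u v -> step s v u.
Proof. by case=> m lt_m uv; exists m; rewrite // setUC. Qed.

Lemma in_walk_edges s e :
  reflect (exists2 m, m.+1 < size s & edge_verts e = [set nth x0 s m; nth x0 s m.+1])
          (e \in walk_edges s).
Proof.
rewrite inE; apply: (iffP hasP) => [[q /(mem_zip_behead x0)[m lt_m ->] /eqP] | [m lt_m e_m]].
  by exists m.
exists (nth x0 s m, nth x0 s m.+1); last by rewrite e_m.
by apply/(mem_zip_behead x0); exists m.
Qed.

Lemma walk_side s m : is_walk s -> m < size s ->
  on_left (nth x0 s m) = on_left (nth x0 s 0) (+) odd m.
Proof.
move=> walk_s; elim: m => [|m IHm] lt_m; first by rewrite addbF.
have := walk_s m lt_m; rewrite adjacentE IHm ?(ltnW lt_m) //=.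
by case: (on_left (nth x0 s m.+1)); case: (on_left (nth x0 s 0)); case: (odd m).
Qed.

Lemma walk_rev s : is_walk s -> is_walk (rev s).
Proof.
move=> walk_s m; rewrite size_rev => lt_m.
have := walk_s (size s - m.+2); rewrite !nth_rev; try lia.
have -> : (size s - m.+2).+1 = size s - m.+1 by lia.
by rewrite !adjacentE eq_sym; apply; lia.
Qed.

Lemma walk_edges_rev s : walk_edges (rev s) = walk_edges s.
Proof.
suff sub s1 : walk_edges (rev s1) \subset walk_edges s1.
  by apply/eqP; rewrite eqEsubset sub; have := sub (rev s); rewrite revK.
apply/subsetP => e /in_walk_edges[m]; rewrite size_rev => lt_m e_m.
apply/in_walk_edges; exists (size s1 - m.+2); first lia.
rewrite e_m setUC !nth_rev; try lia.
by congr [set nth _ _ _; nth _ _ _]; lia.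
Qed.

Lemma verts_walk_edges s v : is_walk s -> 1 < size s ->
  (v \in verts (walk_edges s)) = (v \in s).
Proof.
move=> walk_s s_gt1; apply/bigcupP/idP => [[e /in_walk_edges[m lt_m ->]] | ].
  by case/set2P=> ->; apply: mem_nth => //; exact: ltnW.
case/(nthP x0) => i lt_i <-.
have [m lt_m i_m] : exists2 m, m.+1 < size s & i \in [:: m; m.+1].
  case: (ltnP i.+1 (size s)) => [lt_i1 | ge_i1]; first by exists i; rewrite ?mem_head.
  have i_gt0 : 0 < i by lia.
  by exists i.-1; rewrite prednK // ?inE ?eqxx ?orbT; lia.
have /existsP[e /eqP e_m] := walk_s m lt_m.
exists e; first by apply/in_walk_edges; exists m.
by rewrite e_m; move: i_m; rewrite !inE => /orP[] /eqP->; rewrite eqxx ?orbT.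
Qed.

(* Each step of a walk is one of its edges, so walks with the same edges
   have the same steps. *)
Lemma step_transfer s s' u v :
  is_walk s -> walk_edges s = walk_edges s' -> step s u v -> step s' u v.
Proof.
move=> walk_s edges_eq [m lt_m uv].
have /existsP[e /eqP e_m] := walk_s m lt_m.
have : e \in walk_edges s by apply/in_walk_edges; exists m.
rewrite edges_eq => /in_walk_edges[m' lt_m' e_m'].
by exists m'; rewrite // uv -e_m -e_m'.
Qed.

Lemma step_from s m v : uniq s -> m < size s -> step s (nth x0 s m) v ->
  (m.+1 < size s /\ v = nth x0 s m.+1) \/ (exists2 m', m = m'.+1 & v = nth x0 s m').
Proof.
move=> uniq_s lt_m [q lt_q /doubleton_eq[[/eqP + ->] | [/eqP + ->]]].
- by rewrite nth_uniq ?(ltnW lt_q) // => /eqP->; left.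
- by rewrite nth_uniq // => /eqP->; right; exists q.
Qed.

Lemma step_mem s u v : step s u v -> exists2 r, r < size s & u = nth x0 s r.
Proof.
case=> m lt_m /doubleton_eq[[-> _] | [-> _]]; last by exists m.+1.
by exists m; first exact: ltnW.
Qed.

Section Uniqueness.
Variables s s' : seq (vert n).
Hypotheses (size_eq : size s = size s') (uniq_s : uniq s) (uniq_s' : uniq s').
Hypotheses (walk_s : is_walk s) (walk_s' : is_walk s').
Hypothesis edges_eq : walk_edges s = walk_edges s'.

(* Walks with the same edges and the same first vertex coincide: each next
   vertex is the unique neighbour not visited just before. *)
Lemma walk_eq_from_head : nth x0 s 0 = nth x0 s' 0 -> s = s'.
Proof.
move=> head_eq.
suff agree m : m < size s -> forall i, i <= m -> nth x0 s i = nth x0 s' i.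
  by apply: (eq_from_nth size_eq) => i lt_i; exact: (agree i lt_i i).
elim: m => [|m IHm] lt_m i; first by rewrite leqn0 => /eqP->.
rewrite leq_eqVlt => /orP[/eqP-> {i} | ]; last exact: IHm (ltnW lt_m) i.
have : step s' (nth x0 s' m) (nth x0 s' m.+1) by exists m; rewrite -?size_eq.
rewrite -IHm ?(ltnW lt_m) // => /(step_transfer walk_s' (esym edges_eq)).
case/(step_from uniq_s (ltnW lt_m)) => [[_ ->] // | [m' def_m]].
rewrite (IHm (ltnW lt_m) m'); last by rewrite def_m.
by move/eqP; rewrite nth_uniq -?size_eq //; lia.
Qed.

(* If moreover both walks have an even number of vertices and start on the
   left, their first vertices agree: the first vertex of s' has a single
   neighbour along s', so it is an end of s, and parity excludes the last one. *)
Lemma walk_head_eq : 1 < size s -> ~~ odd (size s) ->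
  on_left (nth x0 s 0) -> on_left (nth x0 s' 0) -> nth x0 s 0 = nth x0 s' 0.
Proof.
move=> s_gt1 even_s left_s left_s'.
have : step s' (nth x0 s' 0) (nth x0 s' 1) by exists 0; rewrite -?size_eq.
case/(step_transfer walk_s' (esym edges_eq))/step_mem => [[|r] lt_r head_r].
  by rewrite head_r.
have nbr v : step s (nth x0 s r.+1) v -> v = nth x0 s' 1.
  move/(step_transfer walk_s edges_eq); rewrite -head_r.
  have s'_gt0 : 0 < size s' by rewrite -size_eq; lia.
  by case/(step_from uniq_s' s'_gt0) => [[_ ->] | [m' //]].
have [lt_r2 | ] := ltnP r.+2 (size s).
  have := nbr _ (step_sym (ex_intro2 _ _ r (ltnW lt_r2) erefl)).
  rewrite -(nbr (nth x0 s r.+2)); last by exists r.+1.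
  by move/eqP; rewrite nth_uniq ?(ltnW (ltnW lt_r2)) // => /eqP; lia.
move=> last_r; have size_s : size s = r.+2 by lia.
have := walk_side walk_s lt_r; rewrite -head_r left_s' left_s /=.
by move: even_s; rewrite size_s /= !negbK => /negbTE ->.
Qed.

Lemma walk_unique : 1 < size s -> ~~ odd (size s) ->
  on_left (nth x0 s 0) -> on_left (nth x0 s' 0) -> s = s'.
Proof. by move=> *; apply: walk_eq_from_head; apply: walk_head_eq. Qed.

End Uniqueness.
End Walks.

Section Zigzag.
Variables n p : nat.
Local Notation k := p.+1.
Local Notation t := p.*2.+1.
Implicit Types (a b : {ffun 'I_k -> 'I_n}) (v : vert n).

Definition zz_vertex a b m : vert n :=
  if odd m then inr (b (inord m./2)) else inl (a (inord m./2)).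

Definition zigzag a b : seq (vert n) := mkseq (zz_vertex a b) t.+1.

Definition zz_path a b : {set edge n} := walk_edges (zigzag a b).

Lemma size_zigzag a b : size (zigzag a b) = t.+1.
Proof. exact: size_mkseq. Qed.

Lemma nth_zigzag x0 a b m : m < t.+1 -> nth x0 (zigzag a b) m = zz_vertex a b m.
Proof. exact: nth_mkseq. Qed.

Lemma even_pos_lt (i : 'I_k) : i.*2 < t.+1.
Proof. have := ltn_ord i; lia. Qed.

Lemma odd_pos_lt (i : 'I_k) : i.*2.+1 < t.+1.
Proof. have := ltn_ord i; lia. Qed.

Lemma zz_vertex_even a b (i : 'I_k) : zz_vertex a b i.*2 = inl (a i).
Proof. by rewrite /zz_vertex odd_double doubleK inord_val. Qed.

Lemma zz_vertex_odd a b (i : 'I_k) : zz_vertex a b i.*2.+1 = inr (b i).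
Proof. by rewrite /zz_vertex /= odd_double uphalf_double inord_val. Qed.

Lemma zz_vertex_side a b m : on_left (zz_vertex a b m) = ~~ odd m.
Proof. by rewrite /zz_vertex; case: (odd m). Qed.

Lemma zigzag_walk x0 a b : is_walk x0 (zigzag a b).
Proof.
move=> m; rewrite size_zigzag => lt_m.
by rewrite !nth_zigzag ?(ltnW lt_m) // adjacentE !zz_vertex_side /= negbK; case: (odd m).
Qed.

Lemma zigzag_uniq a b : injective a -> injective b -> uniq (zigzag a b).
Proof.
move=> inj_a inj_b; rewrite map_inj_in_uniq ?iota_uniq // => m1 m2.
rewrite !mem_iota !add0n => /andP[_ lt_m1] /andP[_ lt_m2] eq_v.
have half_lt m : m < t.+1 -> m./2 < k by lia.
have inord_half m : m < t.+1 -> (inord m./2 : 'I_k) = m./2 :> nat.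
  by move=> lt_m; rewrite inordK ?half_lt.
suff [halves parities] : m1./2 = m2./2 /\ odd m1 = odd m2.
  by rewrite -(odd_double_half m1) -(odd_double_half m2) halves parities.
move: eq_v; rewrite /zz_vertex.
case: (odd m1); case: (odd m2) => // -[] eq_half; split => //.
  by move/inj_b/(congr1 (@nat_of_ord _)): eq_half; rewrite !inord_half.
by move/inj_a/(congr1 (@nat_of_ord _)): eq_half; rewrite !inord_half.
Qed.

Lemma verts_zz_path a b :
  verts (zz_path a b) = [set inl (a i) | i : 'I_k] :|: [set inr (b i) | i : 'I_k].
Proof.
apply/setP => v; rewrite (verts_walk_edges _ (@zigzag_walk v a b)) ?size_zigzag //.
apply/(nthP v)/setUP => [[m] | [] /imsetP[i _ ->]].
- rewrite size_zigzag => lt_m; rewrite nth_zigzag // /zz_vertex => <-.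
  by case: (odd m); [right | left]; apply: imset_f.
- by exists i.*2; rewrite ?size_zigzag ?nth_zigzag ?zz_vertex_even ?even_pos_lt.
- by exists i.*2.+1; rewrite ?size_zigzag ?nth_zigzag ?zz_vertex_odd ?odd_pos_lt.
Qed.

Lemma zz_path_tpath a b : injective a -> injective b -> is_tpath t (zz_path a b).
Proof.
move=> inj_a inj_b; apply/existsP.
exists (Tuple (introT eqP (size_zigzag a b))); apply/and3P; split => //.
  exact: zigzag_uniq.
apply/allP => q /(mem_zip_behead (inl (a ord0)))[m lt_m ->].
exact: zigzag_walk.
Qed.

Lemma zigzag_of_walk x0 (s : seq (vert n)) :
  size s = t.+1 -> uniq s -> is_walk x0 s -> on_left (nth x0 s 0) ->
  exists a b, [/\ injective a, injective b & zigzag a b = s].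
Proof.
move=> size_s uniq_s walk_s left_s.
have side m : m < t.+1 -> on_left (nth x0 s m) = ~~ odd m.
  by move=> lt_m; rewrite (walk_side walk_s) ?size_s // left_s.
have nth_inj m1 m2 : m1 < t.+1 -> m2 < t.+1 ->
    vindex (nth x0 s m1) = vindex (nth x0 s m2) -> odd m1 = odd m2 -> m1 = m2.
  move=> lt_m1 lt_m2 index_eq odd_eq; apply/eqP; rewrite -(nth_uniq x0 _ _ uniq_s) ?size_s //.
  by apply/eqP/vindex_inj; rewrite // !side // odd_eq.
exists [ffun i : 'I_k => vindex (nth x0 s i.*2)].
exists [ffun i : 'I_k => vindex (nth x0 s i.*2.+1)].
split.
- move=> i j; rewrite !ffunE => /nth_inj; rewrite !even_pos_lt !odd_double.
  by move/(_ isT isT erefl)/double_inj/val_inj.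
- move=> i j; rewrite !ffunE => /nth_inj; rewrite !odd_pos_lt /= !odd_double.
  by move/(_ isT isT erefl) => [] /double_inj/val_inj.
apply: (eq_from_nth (x0 := x0)); rewrite size_zigzag // => m lt_m.
rewrite nth_zigzag // -[nth x0 s m]vindexK side // /zz_vertex !ffunE !inordK; try lia.
case: (boolP (odd m)) => /= odd_m; rewrite -[in RHS](odd_double_half m) ?odd_m //.
by rewrite (negbTE odd_m).
Qed.

(* Conversely every t-path is a zigzag path: read it from its left end. *)
Lemma tpath_zz_path (E : {set edge n}) : is_tpath t E ->
  exists a b, [/\ injective a, injective b & E = zz_path a b].
Proof.
case/existsP => s /and3P[uniq_s /allP adj_s /eqP->].
set x0 := thead s; have size_s : size s = t.+1 := size_tuple s.
have walk_s : is_walk x0 s.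
  move=> m lt_m; apply: (adj_s (nth x0 s m, nth x0 s m.+1)).
  by apply/(mem_zip_behead x0); exists m.
have [left_s | right_s] := boolP (on_left (nth x0 s 0)).
  have [a [b [inj_a inj_b zz_s]]] := zigzag_of_walk size_s uniq_s walk_s left_s.
  by exists a, b; rewrite /zz_path zz_s.
have size_rs : size (rev s) = t.+1 by rewrite size_rev.
have uniq_rs : uniq (rev s) by rewrite rev_uniq.
have left_rs : on_left (nth x0 (rev s) 0).
  rewrite nth_rev size_s // subn1 /= (walk_side walk_s) ?size_s //.
  by rewrite (negbTE right_s) /= odd_double.
have [a [b [inj_a inj_b zz_s]]] :=
  zigzag_of_walk size_rs uniq_rs (walk_rev walk_s) left_rs.
by exists a, b; rewrite /zz_path zz_s walk_edges_rev.
Qed.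

Lemma zz_path_inj a b a' b' :
  injective a -> injective b -> injective a' -> injective b' ->
  zz_path a b = zz_path a' b' -> a = a' /\ b = b'.
Proof.
move=> inj_a inj_b inj_a' inj_b' path_eq.
set x0 : vert n := inl (a ord0).
have zz_eq : zigzag a b = zigzag a' b'.
  apply: (walk_unique (x0 := x0)); rewrite ?size_zigzag ?zigzag_uniq //=.
  - exact: zigzag_walk.
  - exact: zigzag_walk.
  - by rewrite odd_double.
split; apply/ffunP => i.
- have := congr1 (nth x0 ^~ i.*2) zz_eq.
  by rewrite !nth_zigzag ?even_pos_lt // !zz_vertex_even => -[].
- have := congr1 (nth x0 ^~ i.*2.+1) zz_eq.
  by rewrite !nth_zigzag ?odd_pos_lt // !zz_vertex_odd => -[].
Qed.

End Zigzag.

Lemma card_bigcup_disjoint (I T : finType) (F : {set I}) (A : I -> {set T}) :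
  {in F &, forall i j, i != j -> [disjoint A i & A j]} ->
  #|\bigcup_(i in F) A i| = \sum_(i in F) #|A i|.
Proof.
have [m] := ubnP #|F|; elim: m F => // m IHm F card_F disjF.
have [-> | [i Fi]] := set_0Vmem F; first by rewrite !big_set0 cards0.
have sub_F : {subset F :\ i <= F} by move=> j /setD1P[].
rewrite (big_setD1 i Fi) [RHS](big_setD1 i Fi) /= cardsU IHm; first last.
- by move=> j1 j2 /sub_F F1 /sub_F F2; apply: disjF.
- by move: card_F; rewrite (cardsD1 i F) Fi.
rewrite disjoint_setI0 ?cards0 ?subn0 //; apply: bigcup_disjoint => j /setD1P[ne_ji Fj].
by apply: disjF; rewrite // eq_sym.
Qed.

Lemma card_pairs (T U : finType) (A : {set T}) (Q : T -> pred U) :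
  #|[set x : T * U | (x.1 \in A) && Q x.1 x.2]| = \sum_(a in A) #|[set b | Q a b]|.
Proof.
rewrite cardsE -sum1_card -(pair_big_dep (fun a => a \in A) Q (fun _ _ => 1)) /=.
by apply: eq_bigr => a _; rewrite cardsE sum1_card.
Qed.

Lemma ffactD m a b : m ^_ (a + b) = m ^_ a * (m - a) ^_ b.
Proof.
elim: b => [|b IHb]; first by rewrite addn0 muln1.
by rewrite addnS !ffactnSr IHb subnDA mulnA.
Qed.

Section Families.
Variables n p : nat.
Local Notation k := p.+1.
Local Notation t := p.*2.+1.
Implicit Types (P E : {set edge n}) (F G : {set {set edge n}}) (W : {set vert n}).

Lemma tpath_familyP F :
  reflect ((forall E, E \in F -> is_tpath t E) /\
           {in F &, forall E1 E2, E1 != E2 -> [disjoint verts E1 & verts E2]})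
          (tpath_family t F).
Proof.
apply: (iffP andP) => [[/forall_inP paths /forall_inP disj] | [paths disj]].
  by split=> // E1 E2 F1 F2; move/forall_inP/(_ E2 F2)/implyP: (disj E1 F1).
split; apply/forall_inP => // E1 F1; apply/forall_inP => E2 F2.
by apply/implyP; apply: disj.
Qed.

Definition covered F : {set vert n} := \bigcup_(E in F) verts E.

(* A t-path has vertices, so it is disjoint from no family containing it. *)
Lemma tpath_verts_neq0 P : is_tpath t P -> verts P != set0.
Proof.
case/tpath_zz_path => a [b [_ _ ->]]; apply/set0Pn; exists (inl (a ord0)).
by rewrite verts_zz_path inE; apply/orP; left; apply: imset_f.
Qed.

Lemma tpath_family_setD1 F P : tpath_family t F -> P \in F ->
  [/\ tpath_family t (F :\ P), is_tpath t P & [disjoint verts P & covered (F :\ P)]].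
Proof.
case/tpath_familyP => paths disj FP; split; last 1 first.
- apply: bigcup_disjoint => E /setD1P[ne_EP FE].
  by apply: disj; rewrite // eq_sym.
- by apply/tpath_familyP; split=> [E /setD1P[_] | E1 E2 /setD1P[_ F1] /setD1P[_ F2]];
    [apply: paths | apply: disj].
- exact: paths.
Qed.

Lemma tpath_family_setU1 G P : tpath_family t G -> is_tpath t P ->
  [disjoint verts P & covered G] -> tpath_family t (P |: G) /\ P \notin G.
Proof.
case/tpath_familyP => paths disj path_P disj_P.
have disj_E E : E \in G -> [disjoint verts P & verts E].
  by move=> GE; apply: disjointWr disj_P; apply: bigcup_sup.
split; last first.
  apply/negP => GP; have /set0Pn[v Pv] := tpath_verts_neq0 path_P.
  by have := disjointFr (disj_E P GP) Pv; rewrite Pv.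
apply/tpath_familyP; split=> [E /setU1P[-> | /paths] // | E1 E2].
move=> /setU1P[-> | G1] /setU1P[-> | G2]; rewrite ?eqxx // => neq12.
- exact: disj_E.
- by rewrite disjoint_sym; apply: disj_E.
- exact: disj.
Qed.

Lemma card_left_tpath P : is_tpath t P -> #|inl @^-1: verts P| = k.
Proof.
case/tpath_zz_path => a [b [inj_a _ ->]].
have -> : inl @^-1: verts (zz_path a b) = [set a i | i : 'I_k].
  apply/setP => x; rewrite !inE verts_zz_path inE.
  apply/orP/imsetP => [[] /imsetP[i _] // [->] | [i _ ->]]; first by exists i.
  by left; apply: imset_f.
by rewrite card_imset ?card_ord.
Qed.

Lemma card_right_tpath P : is_tpath t P -> #|inr @^-1: verts P| = k.
Proof.
case/tpath_zz_path => a [b [_ inj_b ->]].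
have -> : inr @^-1: verts (zz_path a b) = [set b i | i : 'I_k].
  apply/setP => y; rewrite !inE verts_zz_path inE.
  apply/orP/imsetP => [[] /imsetP[i _] // [->] | [i _ ->]]; first by exists i.
  by right; apply: imset_f.
by rewrite card_imset ?card_ord.
Qed.

Lemma card_side_family (side : 'I_n -> vert n) F :
  (forall P, is_tpath t P -> #|side @^-1: verts P| = k) ->
  tpath_family t F -> #|side @^-1: covered F| = k * #|F|.
Proof.
move=> card_path /tpath_familyP[paths disj].
have -> : side @^-1: covered F = \bigcup_(E in F) side @^-1: verts E.
  apply/setP => x; rewrite inE /covered.
  by apply/bigcupP/bigcupP => -[E FE xE]; exists E; rewrite // inE in xE *.
rewrite card_bigcup_disjoint.
  by rewrite (eq_bigr _ (fun E FE => card_path E (paths E FE))) sum_nat_const mulnC.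
move=> E1 E2 F1 F2 /(disj E1 E2 F1 F2); rewrite -!setI_eq0 -preimsetI => /eqP->.
by rewrite preimset0.
Qed.

Lemma family_size_bound F : tpath_family t F -> k * #|F| <= n.
Proof.
move=> fam_F; rewrite -(card_side_family card_left_tpath fam_F).
by rewrite -[leqRHS]card_ord max_card.
Qed.

(* The t-paths avoiding W are the zigzag paths built from injections into
   the free vertices of each part. *)
Lemma card_tpaths_avoiding W :
  #|[set P | is_tpath t P && [disjoint verts P & W]]| =
  #|~: (inl @^-1: W)| ^_ k * #|~: (inr @^-1: W)| ^_ k.
Proof.
set free_l := ~: (inl @^-1: W); set free_r := ~: (inr @^-1: W).
pose inj_on (D : {set 'I_n}) := [set f : {ffun 'I_k -> 'I_n} in ffun_on (mem D) | injectiveb f].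
have card_inj D : #|inj_on D| = #|D| ^_ k by rewrite card_inj_ffuns_on card_ord.
rewrite -!card_inj -cardsX.
have -> : [set P | is_tpath t P && [disjoint verts P & W]] =
          (fun ab => zz_path ab.1 ab.2) @: setX (inj_on free_l) (inj_on free_r).
  apply/setP => P; rewrite inE; apply/andP/imsetP.
  - case=> /tpath_zz_path[a [b [inj_a inj_b ->]]] disj_W.
    exists (a, b) => //; rewrite !inE /=.
    apply/andP; split; apply/andP; split; try exact/injectiveP.
    + apply/ffun_onP => i; rewrite !inE (disjointFr disj_W) //.
      by rewrite verts_zz_path inE imset_f.
    + apply/ffun_onP => i; rewrite !inE (disjointFr disj_W) //.
      by rewrite verts_zz_path inE orbC imset_f.
  - case=> -[a b]; rewrite !inE /=.
    move=> /andP[/andP[/ffun_onP free_a /injectiveP inj_a]].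
    move=> /andP[/ffun_onP free_b /injectiveP inj_b] ->.
    split; first exact: zz_path_tpath.
    rewrite disjoint_subset; apply/subsetP => v.
    rewrite verts_zz_path inE => /orP[] /imsetP[i _ ->]; rewrite inE.
    + by have := free_a i; rewrite !inE.
    + by have := free_b i; rewrite !inE.
apply: card_in_imset => -[a b] [a' b']; rewrite !inE /=.
move=> /andP[/andP[_ /injectiveP inj_a] /andP[_ /injectiveP inj_b]].
move=> /andP[/andP[_ /injectiveP inj_a'] /andP[_ /injectiveP inj_b']].
by move/(zz_path_inj inj_a inj_b inj_a' inj_b') => [-> ->].
Qed.

Definition families j := [set F : {set {set edge n}} | tpath_family t F && (#|F| == j)].
Definition nfam j := #|families j|.

Lemma nfam0 : nfam 0 = 1.
Proof.
rewrite /nfam -(cards1 (set0 : {set {set edge n}})); apply: eq_card => F.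
rewrite !inE cards_eq0; apply/andP/eqP => [[_ /eqP //] | ->]; split=> //.
by apply/tpath_familyP; split=> E; rewrite inE.
Qed.

(* A family of j paths leaves n - k j free vertices in each part, hence
   ((n - k j)^_k)^2 ways to add one more path. *)
Lemma card_extensions j G : G \in families j ->
  #|[set P | is_tpath t P && [disjoint verts P & covered G]]| = ((n - k * j) ^_ k) ^ 2.
Proof.
rewrite inE => /andP[fam_G /eqP card_G].
rewrite card_tpaths_avoiding expnS expn1; congr (_ ^_ k * _ ^_ k).
- by rewrite -card_G -(card_side_family card_left_tpath fam_G) cardsCs setCK card_ord.
- by rewrite -card_G -(card_side_family card_right_tpath fam_G) cardsCs setCK card_ord.
Qed.

(* Double counting: a family of j+1 paths with a marked path is the same as a
   family of j paths together with a t-path disjoint from it. *)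
Lemma nfam_step j : j.+1 * nfam j.+1 = nfam j * ((n - k * j) ^_ k) ^ 2.
Proof.
set marked := [set FP : {set {set edge n}} * {set edge n} |
                 (FP.1 \in families j.+1) && (FP.2 \in FP.1)].
set extended := [set GP : {set {set edge n}} * {set edge n} |
                   (GP.1 \in families j) &&
                   (is_tpath t GP.2 && [disjoint verts GP.2 & covered GP.1])].
have card_marked : #|marked| = j.+1 * nfam j.+1.
  rewrite (card_pairs _ (fun F P => P \in F)) mulnC -sum_nat_const.
  apply: eq_bigr => F.
  by rewrite inE => /andP[_ /eqP <-]; apply: eq_card => P; rewrite inE.
have card_extended : #|extended| = nfam j * ((n - k * j) ^_ k) ^ 2.
  rewrite (card_pairs _ (fun G P => is_tpath t P && [disjoint verts P & covered G])).
  by rewrite -sum_nat_const; apply: eq_bigr => G; apply: card_extensions.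
have add_new GP : GP \in extended -> GP.2 \notin GP.1.
  rewrite inE => /and3P[]; rewrite inE => /andP[fam_G _] path_P disj_P.
  by case: (tpath_family_setU1 fam_G path_P disj_P).
rewrite -card_marked -card_extended.
have -> : marked = (fun GP => (GP.2 |: GP.1, GP.2)) @: extended.
  apply/setP => -[F P]; rewrite inE /=; apply/andP/imsetP => [[] | [[G P'] ext_G [-> ->]]].
  - rewrite inE => /andP[fam_F /eqP card_F] FP.
    have [fam_G path_P disj_P] := tpath_family_setD1 fam_F FP.
    exists (F :\ P, P); last by rewrite /= setD1K.
    rewrite !inE fam_G path_P disj_P !andbT /=.
    by move: card_F; rewrite (cardsD1 P) FP add1n => -[->].
  - have P'_G := add_new _ ext_G.
    move: ext_G; rewrite !inE /= => /and3P[/andP[fam_G card_G] path_P disj_P].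
    have [fam_PG _] := tpath_family_setU1 fam_G path_P disj_P.
    by rewrite fam_PG cardsU1 P'_G (eqP card_G) add1n !eqxx.
apply: card_in_imset => -[G P] [G' P'] ext ext' /= [eq_PG eq_P].
have /= /setU1K G_eq := add_new _ ext.
have /= /setU1K G'_eq := add_new _ ext'.
by rewrite -G_eq -G'_eq eq_PG eq_P.
Qed.

Lemma nfam_fact j : j`! * nfam j = (n ^_ (k * j)) ^ 2.
Proof.
elim: j => [|j IHj]; first by rewrite nfam0 muln0.
have ffact_split : n ^_ (k * j.+1) = n ^_ (k * j) * (n - k * j) ^_ k.
  by rewrite mulnS addnC ffactD.
transitivity (j`! * (j.+1 * nfam j.+1)); first by rewrite factS; ring.
by rewrite nfam_step mulnA IHj ffact_split; ring.
Qed.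

End Families.

Section LaguerreExpansion.
Variable p : nat.
Local Notation k := p.+1.
Local Notation t := p.*2.+1.
Local Open Scope ring_scope.

(* The coefficient of x^(n - k j) in L_n: families of j paths, signed. *)
Definition lag_coef n j : int := (-1) ^+ j * (nfam n p j)%:R.

(* Grouping the families of paths by their size; any number M + 1 > n of
   groups works, since a family has at most n / k paths. *)
Lemma Mt_expansion n M : (n <= M)%N ->
  Mt t n = \sum_(j < M.+1) lag_coef n j *: 'X^((n - k * j).*2).
Proof.
move=> le_nM; rewrite /Mt.
rewrite (partition_big (fun F : {set {set edge n}} => inord #|F| : 'I_M.+1) xpredT) //=.
apply: eq_bigr => j _.
rewrite (eq_bigl (fun F => F \in families n p j)) => [|F]; last first.
  rewrite inE; case fam_F: (tpath_family t F) => //=.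
  have lt_FM : (#|F| < M.+1)%N by have := family_size_bound fam_F; lia.
  by rewrite -(inj_eq val_inj) /= inordK.
rewrite (eq_bigr (fun _ => (-1) ^+ j *: 'X^((n - k * j).*2))) => [|F].
  by rewrite sumr_const scalerMnl -mulr_natr.
rewrite inE => /andP[_ /eqP ->]; congr (_ *: 'X^_); lia.
Qed.

Lemma Lag_expansion n M : (n <= M)%N ->
  Lag t n = \sum_(j < M.+1) (lag_coef n j)%:P * 'X^(n - k * j).
Proof.
move=> le_nM; apply/polyP => i.
rewrite /Lag coef_poly (Mt_expansion le_nM) !coef_sum.
case: ltnP => [le_in | lt_ni].
  apply: eq_bigr => j _; rewrite coefZ coefCM !coefXn mul2n.
  by rewrite (inj_eq double_inj).
rewrite big1 // => j _; rewrite coefCM coefXn.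
have -> : (i == n - k * j)%N = false by apply/eqP; lia.
by rewrite mulr0.
Qed.

End LaguerreExpansion.

Section Recurrence.
Variable p : nat.
Local Notation k := p.+1.
Local Notation t := p.*2.+1.
Local Notation N m j := (nfam m p j).

Definition rec_coef1 n := (k`! ^ 2 * ('C(n, k.-1) ^ 2 + 2 * 'C(n, k) * 'C(n, k.-1)))%N.
Definition rec_coef2 n := (('C(n, t) * 'C(t, k) * k`! ^ 2) ^ 2)%N.

(* In terms of falling factorials, using C(n, m) m! = n^_m. *)
Lemma rec_coef1E n : rec_coef1 n = (n ^_ p) ^ 2 * (k ^ 2 + 2 * k * (n - p)).
Proof.
have fact_p : 'C(n, p) * p`! = n ^_ p := bin_ffact n p.
have fact_k : 'C(n, k) * k`! = n ^_ p * (n - p) by rewrite bin_ffact ffactnSr.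
transitivity ((n ^_ p * k) ^ 2 + 2 * k * n ^_ p * (n ^_ p * (n - p))); last by ring.
by rewrite /rec_coef1 -fact_k -fact_p factS /=; ring.
Qed.

Lemma rec_coef2E n : rec_coef2 n = k ^ 2 * (n ^_ t) ^ 2.
Proof.
have fact_t : 'C(t, k) * (k`! * p`!) = t`!.
  have le_kt : k <= t by lia.
  by rewrite -(bin_fact le_kt) (_ : t - k = p) //; lia.
by rewrite /rec_coef2 -(bin_ffact n t) -fact_t factS; ring.
Qed.

(* The coefficients vanish exactly where the shifted indices are negative. *)
Lemma rec_coef1_small n : n < p -> rec_coef1 n = 0.
Proof. by move=> lt_np; rewrite rec_coef1E ffact_small. Qed.

Lemma rec_coef2_small n : n < t -> rec_coef2 n = 0.
Proof. by move=> lt_nt; rewrite rec_coef2E ffact_small // muln0. Qed.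

Lemma nfam_small n j : n < k * j -> N n j = 0.
Proof.
move=> lt_n; apply/eqP; rewrite -(eqn_pmul2l (fact_gt0 j)) nfam_fact.
by rewrite ffact_small // muln0.
Qed.

Definition prev1 n j := if j is j1.+1 then N (n - p) j1 else 0.
Definition prev2 n j := if j is j2.+2 then N (n - t) j2 else 0.

(* The recurrence for the numbers of families: after multiplying by j! it
   is a polynomial identity in n^_(k j - 1). *)
Lemma nfam_recurrence n j :
  N n.+1 j + rec_coef2 n * prev2 n j = N n j + rec_coef1 n * prev1 n j.
Proof.
case: j => [|j1]; first by rewrite /= !nfam0 !muln0.
apply/eqP; rewrite -(eqn_pmul2l (fact_gt0 j1.+1)) !mulnDr !nfam_fact; apply/eqP.
set q := k * j1 + p; set X := n ^_ q.
have ffact_n1 : n.+1 ^_ (k * j1.+1) = n.+1 * X by rewrite mulnS addnC addnS.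
have ffact_n : n ^_ (k * j1.+1) = X * (n - q) by rewrite mulnS addnC addnS ffactnSr.
have ffact_q : X = n ^_ p * (n - p) ^_ (k * j1) by rewrite /X /q addnC ffactD.
have term1 : j1.+1`! * (rec_coef1 n * prev1 n j1.+1) =
             rec_coef1 n * (j1.+1 * ((n - p) ^_ (k * j1)) ^ 2).
  by rewrite /= -nfam_fact factS; ring.
have term2 : j1.+1`! * (rec_coef2 n * prev2 n j1.+1) = k ^ 2 * (j1.+1 * j1) * X ^ 2.
  case: j1 @q @X {ffact_n1 ffact_n ffact_q term1} => [|j2] q X; first by rewrite /= !muln0.
  have ffact_t : X = n ^_ t * (n - t) ^_ (k * j2).
    by rewrite /X /q -ffactD; congr (_ ^_ _); lia.
  by rewrite rec_coef2E ffact_t expnMn /= -nfam_fact !factS; ring.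
rewrite ffact_n1 ffact_n term1 term2 rec_coef1E.
transitivity (X ^ 2 * (n.+1 ^ 2 + k ^ 2 * (j1.+1 * j1))); first by ring.
transitivity (X ^ 2 * ((n - q) ^ 2 + (k ^ 2 + 2 * k * (n - p)) * j1.+1)); last first.
  by rewrite ffact_q; ring.
have [le_qn | lt_nq] := leqP q n; last by rewrite /X ffact_small.
have [r def_n] : exists r, n = q + r by exists (n - q); lia.
have -> : n - q = r by lia.
have -> : n - p = k * j1 + r by lia.
by rewrite def_n /q; ring.
Qed.

Local Open Scope ring_scope.

(* The recurrence for L with truncated subtraction in the indices; when
   n - p or n - t would be negative, its coefficient vanishes anyway.  Both
   sides are expanded over the same exponents x^(n+1-kj), shifting the index
   j by one and two in the last two sums. *)
Lemma Lag_recurrence n :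
  Lag t n.+1 = 'X * Lag t n - (rec_coef1 n)%:R * Lag t (n - p)
                            - (rec_coef2 n)%:R * Lag t (n - t).
Proof.
pose s j : int := (-1) ^+ j.
pose e j : {poly int} := 'X^(n.+1 - k * j).
have expand0 : 'X * Lag t n = \sum_(j < n.+3) (s j * (N n j)%:R)%:P * e j.
  rewrite (Lag_expansion p (M := n.+2)) 1?mulr_sumr; last lia.
  apply: eq_bigr => j _.
  rewrite mulrCA -exprS.
  have [le_kj | lt_nkj] := leqP (k * j) n; first by rewrite /e subSn.
  by rewrite /lag_coef nfam_small // mulr0 !mul0r.
have expand1 : Lag t (n - p) = - \sum_(j < n.+3) (s j * (prev1 n j)%:R)%:P * e j.
  rewrite big_ord_recl /= mulr0 mul0r add0r -sumrN.
  rewrite (Lag_expansion p (M := n.+1)); last lia.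
  apply: eq_bigr => j _; rewrite /s /e /lag_coef exprS mulN1r mulNr polyCN mulNr opprK.
  by congr (_ * 'X^_); rewrite (_ : bump 0 j = j.+1) //; lia.
have expand2 : Lag t (n - t) = \sum_(j < n.+3) (s j * (prev2 n j)%:R)%:P * e j.
  rewrite 2!big_ord_recl /= !mulr0 !mul0r !add0r.
  rewrite (Lag_expansion p (M := n)); last lia.
  apply: eq_bigr => j _; rewrite /s /e /lag_coef !exprS !mulN1r opprK.
  by congr (_ * 'X^_); rewrite (_ : bump 0 (bump 0 j) = j.+2) //; lia.
rewrite (Lag_expansion p (M := n.+2)) 1?expand0 ?expand1 ?expand2; last lia.
rewrite mulrN opprK.
rewrite !mulr_sumr -big_split -sumrB /=; apply: eq_bigr => j _.
rewrite -!polyC_natr !mulrA -!polyCM -mulrDl -mulrBl -polyCD -polyCB; congr (_ * _).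
have key : (N n.+1 j)%:R = (N n j)%:R + (rec_coef1 n)%:R * (prev1 n j)%:R
                           - (rec_coef2 n)%:R * (prev2 n j)%:R :> int.
  by rewrite -!natrM -natrD -nfam_recurrence natrD addrK.
by rewrite /lag_coef key /s; ring.
Qed.

End Recurrence.

Local Open Scope ring_scope.

Lemma Lagz_sub t m q : Lagz t (m%:Z - q%:Z) = if (q <= m)%N then Lag t (m - q)%N else 0.
Proof.
case: leqP => [le_qm | lt_mq]; first by rewrite subzn.
have gt0_qm : (0 < q - m)%N by rewrite subn_gt0.
by rewrite -opprB subzn ?(ltnW lt_mq) // -(prednK gt0_qm) -NegzE.
Qed.

Lemma scale_Lagz t c m q : ((m < q)%N -> c = 0%N) ->
  c%:R * Lagz t (m%:Z - q%:Z) = c%:R * Lag t (m - q)%N.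
Proof.
by rewrite Lagz_sub; case: leqP => // _ /(_ isT) ->; rewrite !mul0r.
Qed.

Lemma Lagz_recurrence p n :
  Lag p.*2.+1 n.+1 =
    'X * Lag p.*2.+1 n - (rec_coef1 p n)%:R * Lagz p.*2.+1 (n%:Z - p%:Z)
                       - (rec_coef2 p n)%:R * Lagz p.*2.+1 (n%:Z - p.*2.+1%:Z).
Proof.
rewrite !scale_Lagz; first exact: Lag_recurrence.
- exact: rec_coef2_small.
- exact: rec_coef1_small.
Qed.

Unset Implicit Arguments.

Theorem mainTheorem15 (t k n : nat) (ht : odd t) (hk : k = (t.+1)./2) :
  Lag t n.+1 =
    'X * Lag t n
    - ((k`! ^ 2 * ('C(n, k.-1) ^ 2 + 2 * 'C(n, k) * 'C(n, k.-1)))%N)%:R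
        * Lagz t (n%:Z - (k.-1)%:Z)
    - (('C(n, t) * 'C(t, k) * k`! ^ 2) ^ 2)%N%:R
        * Lagz t (n%:Z - t%:Z).
Proof.
have [p def_t] : exists p, t = p.*2.+1.
  by exists t./2; rewrite -[t in LHS]odd_double_half ht.
have def_k : k = p.+1 by rewrite hk def_t; lia.
clear hk; subst k t; exact: Lagz_recurrence.
Qed.
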